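(* Let $(\Lambda_t)_{t\ge 0}$ be a family of completely positive trace-preserving (CPTP) maps on single-qubit density matrices with $\Lambda_0=\mathrm{id}$. Suppose that for every $0\le s\le t$ there is a linear map $V_{t,s}$ with $\Lambda_t=V_{t,s}\circ\Lambda_s$ that admits the decomposition $$V_{t,s}[X]=p\,\mathcal{E}_1[X]+(1-p)\,\mathcal{E}_2[X^{T}]$$ for all $2\times 2$ matrices $X$, where $p=p(t,s)\in[0,1]$, $\mathcal{E}_1=\mathcal{E}_1^{(t,s)}$ and $\mathcal{E}_2=\mathcal{E}_2^{(t,s)}$ are CPTP maps on qubits, and $X^T$ is the transpose in a fixed basis. (Such a $V_{t,s}$ may fail to be completely positive, i.e. the evolution may be non-Markovian.) Then for every contractive function $f$ and every pair of single-qubit states $\rho,\sigma$, the function $t\mapsto f(\Lambda_t[\rho],\Lambda_t[\sigma])$ is non-increasing: $f(\Lambda_t[\rho],\Lambda_t[\sigma])\le f(\Lambda_s[\rho],\Lambda_s[\sigma])$ for all $0\le s\le t$; in particular $\frac{\mathrm d}{\mathrm dt}f(\Lambda_t[\rho],\Lambda_t[\sigma])\le 0$ wherever the derivative exists.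
   Context: A function $f(\rho,\sigma)$ of pairs of quantum states (density matrices) is called contractive if $f(\Lambda[\rho],\Lambda[\sigma])\le f(\rho,\sigma)$ for every CPTP map $\Lambda$ and all states $\rho,\sigma$ (examples: trace distance $\tfrac12\|\rho-\sigma\|_1$, infidelity $1-\|\sqrt\rho\sqrt\sigma\|_1$, quantum relative entropy). An evolution $(\Lambda_t)$ is called Markovian (CP-divisible) if for every $0\le s\le t$ there exists a CPTP map $V_{t,s}$ with $\Lambda_t=V_{t,s}\circ\Lambda_s$, and non-Markovian otherwise. *)

From HB Require Import structures.
From mathcomp Require Import all_boot all_order all_algebra.
Set Implicit Arguments. Unset Strict Implicit. Unset Printing Implicit Defensive.
Import Order.TTheory GRing.Theory Num.Theory.
Local Open Scope ring_scope.

Section QubitDefs.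
Variable C : numClosedFieldType.

Definition adjv (v : 'cV[C]_2) : 'rV[C]_2 := (map_mx (fun z => z^*) v)^T.

Definition psd (A : 'M[C]_2) : Prop :=
  forall v : 'cV[C]_2, 0 <= (adjv v *m A *m v) 0 0.

Definition is_state (rho : 'M[C]_2) : Prop := psd rho /\ \tr rho = 1.

(* positivity of an operator on C^n (x) C^2, given as an n x n array of
   2x2 blocks B i j; this is <w, B w> >= 0 for all w = (v_i)_i *)
Definition block_psd (n : nat) (B : 'I_n -> 'I_n -> 'M[C]_2) : Prop :=
  forall v : 'I_n -> 'cV[C]_2,
    0 <= \sum_(i < n) \sum_(j < n) (adjv (v i) *m B i j *m v j) 0 0.

Definition is_linear_map (L : 'M[C]_2 -> 'M[C]_2) : Prop :=
  forall (a : C) (X Y : 'M[C]_2), L (a *: X + Y) = a *: L X + L Y.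

(* complete positivity: L (x) id_n is positive for every n *)
Definition completely_positive (L : 'M[C]_2 -> 'M[C]_2) : Prop :=
  forall (n : nat) (B : 'I_n -> 'I_n -> 'M[C]_2),
    block_psd B -> block_psd (fun i j => L (B i j)).

Definition trace_preserving (L : 'M[C]_2 -> 'M[C]_2) : Prop :=
  forall X : 'M[C]_2, \tr (L X) = \tr X.

Definition cptp (L : 'M[C]_2 -> 'M[C]_2) : Prop :=
  [/\ is_linear_map L, completely_positive L & trace_preserving L].

(* contractive function of pairs of qubit states, valued in an arbitrary
   partially ordered type (allows e.g. extended reals for relative entropy) *)
Definition contractive (disp : Order.disp_t) (T : porderType disp)
    (f : 'M[C]_2 -> 'M[C]_2 -> T) : Prop :=
  forall (L : 'M[C]_2 -> 'M[C]_2) (rho sigma : 'M[C]_2),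
    cptp L -> is_state rho -> is_state sigma ->
    (f (L rho) (L sigma) <= f rho sigma)%O.

End QubitDefs.

(* If the intermediate map V = p E1 + (1 - p) E2 o T of a qubit evolution is
   not completely positive, it still cannot increase a contractive function
   f(Lam_s rho, Lam_s sigma): on any PAIR of qubit states a, b the transpose
   T coincides with a CPTP map M.  Indeed, for Hermitian 2x2 matrices the
   transpose is the reflection y -> -y of the Bloch ball, and one can find a
   matrix K = [[-w*, z], [z, w]] (z real, (w, z) <> 0) with K^* K = c I and
   K a K^* = c a^T, K b K^* = c b^T: the two conditions are two real-linear
   equations in the three real unknowns Re w, Im w, z.  Then
   L := p E1 + (1 - p) E2 o M is CPTP and agrees with V on a and b, so
   f(V a, V b) = f(L a, L b) <= f(a, b). *)
From HB Require Import structures.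
From mathcomp Require Import all_boot all_order all_algebra.
From mathcomp Require Import ring.
Import Order.TTheory GRing.Theory Num.Theory.
Local Open Scope ring_scope.
Local Open Scope sesquilinear_scope.
Set Implicit Arguments. Unset Strict Implicit. Unset Printing Implicit Defensive.

Section QubitMaps.
Variable C : numClosedFieldType.
Implicit Types (A X : 'M[C]_2) (L E M : 'M[C]_2 -> 'M[C]_2).

Lemma ord2P (i : 'I_2) : i = 0 \/ i = 1.
Proof. by case: i => [[|[|k]] hk] //; [left | right]; apply/val_inj. Qed.

Lemma sum2E (F : 'I_2 -> C) : \sum_(i < 2) F i = F 0 + F 1.
Proof. by rewrite big_ord_recr /= big_ord1; congr (F _ + F _); apply/val_inj. Qed.

Lemma mulmx2E m n (A : 'M[C]_(m, 2)) (B : 'M[C]_(2, n)) i j :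
  (A *m B) i j = A i 0 * B 0 j + A i 1 * B 1 j.
Proof. by rewrite mxE sum2E. Qed.

Lemma formD (u v : 'cV[C]_2) A X :
  (adjv u *m (A + X) *m v) 0 0 = (adjv u *m A *m v) 0 0 + (adjv u *m X *m v) 0 0.
Proof. by rewrite mulmxDr mulmxDl mxE. Qed.

Lemma formZ (u v : 'cV[C]_2) (c : C) A :
  (adjv u *m (c *: A) *m v) 0 0 = c * (adjv u *m A *m v) 0 0.
Proof. by rewrite -scalemxAr -scalemxAl mxE. Qed.

Lemma adjv_mulmx A (v : 'cV[C]_2) : adjv (A *m v) = adjv v *m A ^t*.
Proof. by rewrite /adjv map_mxM trmx_mul; congr (_ *m _); rewrite map_trmx. Qed.

Definition col2 (x y : C) : 'cV[C]_2 := \col_i (if i == 0 then x else y).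

Lemma formE A x y : (adjv (col2 x y) *m A *m col2 x y) 0 0 =
  x^* * (A 0 0 * x + A 0 1 * y) + y^* * (A 1 0 * x + A 1 1 * y).
Proof. by rewrite !mulmx2E !mxE /=; ring. Qed.

Lemma conj_of_real_parts (a b : C) :
  a + b \is Num.real -> 'i * (a - b) \is Num.real -> b = a^*.
Proof.
move=> /CrealP h1 /CrealP h2.
rewrite rmorphD in h1; rewrite rmorphM rmorphB /= conjCi in h2.
have /eqP : 'i * ((a - b) + (a^* - b^*)) = 0.
  by rewrite mulrDr -h2; ring.
rewrite mulf_eq0 (negbTE (neq0Ci C)) /= => /eqP h3.
have /eqP : (b - a^*) * 2 = 0.
  by transitivity ((a + b - (a^* + b^*)) - (a - b + (a^* - b^*))); [ring | rewrite h1 h3; ring].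
by rewrite mulf_eq0 pnatr_eq0 orbF subr_eq0 => /eqP.
Qed.

(* Positive semidefinite 2x2 matrices are Hermitian: test the (real) form
   <v, A v> at v = (1, 0), (0, 1), (1, 1) and (1, i). *)
Lemma psd_hermitian A : psd A ->
  [/\ A 1 0 = (A 0 1)^*, A 0 0 \is Num.real & A 1 1 \is Num.real].
Proof.
move=> hA.
have q_real x y : x^* * (A 0 0 * x + A 0 1 * y) + y^* * (A 1 0 * x + A 1 1 * y)
    \is Num.real by rewrite -formE; apply/ger0_real/hA.
have r00 : A 0 0 \is Num.real.
  by have := q_real 1 0; rewrite conjC1 conjC0 !(mul0r, mulr0, mul1r, mulr1, addr0).
have r11 : A 1 1 \is Num.real.
  by have := q_real 0 1; rewrite conjC1 conjC0 !(mul0r, mulr0, mul1r, mulr1, add0r).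
have rsum : A 0 1 + A 1 0 \is Num.real.
  have := q_real 1 1; rewrite conjC1 !(mul1r, mulr1) => h.
  have -> : A 0 1 + A 1 0 = (A 0 0 + A 0 1 + (A 1 0 + A 1 1)) - A 0 0 - A 1 1 by ring.
  by rewrite !rpredB.
have rdiff : 'i * (A 0 1 - A 1 0) \is Num.real.
  have := q_real 1 'i; rewrite conjC1 conjCi.
  rewrite (_ : 1 * (A 0 0 * 1 + A 0 1 * 'i) + - 'i * (A 1 0 * 1 + A 1 1 * 'i) =
      A 0 0 + 'i * (A 0 1 - A 1 0) - 'i * 'i * A 1 1); last by ring.
  rewrite -expr2 sqrCi mulN1r opprK => h.
  have -> : 'i * (A 0 1 - A 1 0) = (A 0 0 + 'i * (A 0 1 - A 1 0) + A 1 1) - A 0 0 - A 1 1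
    by ring.
  by rewrite !rpredB.
by split => //; apply: conj_of_real_parts.
Qed.

Lemma cp_psd L X : completely_positive L -> psd X -> psd (L X).
Proof.
have psd_block1 Y : psd Y <-> block_psd (fun _ _ : 'I_1 => Y).
  by split=> hY v; [rewrite !big_ord1; apply: hY | have := hY (fun=> v); rewrite !big_ord1].
by move=> hL /psd_block1 hX; apply/psd_block1; apply: (hL 1%N (fun _ _ => X)).
Qed.

Lemma cptp_state L rho : cptp L -> is_state rho -> is_state (L rho).
Proof. by case=> _ hL hT [hr tr]; split; [apply: cp_psd | rewrite hT]. Qed.

Lemma cp_conic L1 L2 (p q : C) :
  completely_positive L1 -> completely_positive L2 -> 0 <= p -> 0 <= q ->
  completely_positive (fun X => p *: L1 X + q *: L2 X).
Proof.
move=> h1 h2 hp hq n B hB v.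
under eq_bigr => i _ do under eq_bigr => j _ do rewrite formD !formZ.
under eq_bigr => i _ do rewrite big_split /= -!mulr_sumr.
rewrite big_split /= -!mulr_sumr.
by apply: addr_ge0; apply: mulr_ge0 => //; [apply: h1 | apply: h2].
Qed.

Lemma cptp_convex E1 E2 (p : C) : cptp E1 -> cptp E2 -> 0 <= p <= 1 ->
  cptp (fun X => p *: E1 X + (1 - p) *: E2 X).
Proof.
case=> l1 c1 t1 [l2 c2 t2] /andP[p0 p1]; split.
- move=> a X Y; rewrite l1 l2 !scalerDr !scalerA (mulrC p) (mulrC (1 - p)) -!scalerA.
  by rewrite !addrA; congr (_ + _); rewrite -!addrA; congr (_ + _); rewrite addrC.
- by apply: cp_conic => //; rewrite subr_ge0.
- by move=> X; rewrite mxtraceD !mxtraceZ t1 t2 -mulrDl addrC subrK mul1r.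
Qed.

Lemma cptp_comp E M : cptp E -> cptp M -> cptp (fun X => E (M X)).
Proof.
case=> l1 c1 t1 [l2 c2 t2]; split.
- by move=> a X Y; rewrite l2 l1.
- by move=> n B hB; apply: c1; apply: c2.
- by move=> X; rewrite t1 t2.
Qed.

Definition conj_map (K : 'M[C]_2) (c : C) X : 'M[C]_2 := c^-1 *: (K *m X *m K ^t*).

Lemma conj_map_cptp (K : 'M[C]_2) (c : C) :
  0 < c -> K ^t* *m K = c%:M -> cptp (conj_map K c).
Proof.
move=> c_gt0 hK; split.
- move=> a X Y; rewrite /conj_map mulmxDr mulmxDl -scalemxAr -scalemxAl.
  by rewrite scalerDr scalerA mulrC -scalerA.
- move=> n B hB v; rewrite /conj_map.
  under eq_bigr => i _ do under eq_bigr => j _ do rewrite formZ.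
  under eq_bigr => i _ do rewrite -mulr_sumr.
  rewrite -mulr_sumr; apply: mulr_ge0; first by rewrite invr_ge0 ltW.
  have := hB (fun i => K ^t* *m v i); congr (0 <= _).
  apply: eq_bigr => i _; apply: eq_bigr => j _.
  by rewrite adjv_mulmx trmxCK !mulmxA.
- move=> X; rewrite /conj_map mxtraceZ mxtrace_mulC mulmxA hK mul_scalar_mx.
  by rewrite mxtraceZ mulrA mulVf ?mul1r ?gt_eqF.
Qed.

(* The matrix K = [[-w^*, z], [z, w]] with z real satisfies K^* K = c I,
   c = |w|^2 + z^2; conjugating by it realises the transpose on every
   Hermitian matrix a whose entries satisfy one real-linear condition. *)
Definition reflector (w z : C) : 'M[C]_2 :=
  \matrix_(i, j) (if i == 0 then (if j == 0 then - w^* else z)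
                  else (if j == 0 then z else w)).

Definition reflector_scale (w z : C) : C := w * w^* + z * z^*.

Lemma reflector_scale_gt0 (w z : C) : (w != 0) || (z != 0) -> 0 < reflector_scale w z.
Proof.
move=> wz_neq0; rewrite lt_def addr_ge0 ?mul_conjC_ge0 // andbT.
by rewrite paddr_eq0 ?mul_conjC_ge0 // !mul_conjC_eq0 negb_and.
Qed.

Lemma reflector_gram (w z : C) : z \is Num.real ->
  (reflector w z) ^t* *m reflector w z = (reflector_scale w z)%:M.
Proof.
move=> /CrealP hz; apply/matrixP => i j; rewrite mulmx2E !mxE /reflector_scale.
by case: (ord2P i) => ->; case: (ord2P j) => -> /=;
  rewrite ?rmorphN /= ?conjCK ?hz ?mulr1n ?mulr0n; ring.
Qed.

Lemma reflector_transposes (w z : C) A : (w != 0) || (z != 0) -> z \is Num.real ->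
  w^* * A 0 1 + w * A 1 0 + z * (A 0 0 - A 1 1) = 0 ->
  conj_map (reflector w z) (reflector_scale w z) A = A^T.
Proof.
move=> /reflector_scale_gt0 /gt_eqF /negbT scale_neq0 /CrealP hz hA.
suff e : reflector w z *m A *m (reflector w z) ^t* = reflector_scale w z *: A^T.
  by rewrite /conj_map e scalerA mulVf // scale1r.
apply/matrixP => i j; rewrite !mulmx2E !mxE /reflector_scale.
case: (ord2P i) => ->; case: (ord2P j) => -> /=; rewrite ?rmorphN /= ?conjCK ?hz;
  apply/eqP; rewrite -subr_eq0; apply/eqP.
- by transitivity (- z * (w^* * A 0 1 + w * A 1 0 + z * (A 0 0 - A 1 1))); [ring | rewrite hA mulr0].
- by transitivity (- w^* * (w^* * A 0 1 + w * A 1 0 + z * (A 0 0 - A 1 1))); [ring | rewrite hA mulr0].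
- by transitivity (- w * (w^* * A 0 1 + w * A 1 0 + z * (A 0 0 - A 1 1))); [ring | rewrite hA mulr0].
- by transitivity (z * (w^* * A 0 1 + w * A 1 0 + z * (A 0 0 - A 1 1))); [ring | rewrite hA mulr0].
Qed.

(* Two real-linear equations in the three real unknowns (Re w, Im w, z) have
   a nonzero solution: take z = 0 and w = i b (or i d) when d^* b is real,
   and otherwise the "cross product" of the two equations. *)
Lemma reflector_exists (b d u v : C) : u \is Num.real -> v \is Num.real ->
  exists w z : C, [/\ (w != 0) || (z != 0), z \is Num.real,
     w^* * b + w * b^* + z * u = 0 & w^* * d + w * d^* + z * v = 0].
Proof.
move=> /CrealP hu /CrealP hv.
have [im0|imn0] := eqVneq (d^* * b - d * b^*) 0.
  have [b0|bn0] := eqVneq b 0.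
    have [d0|dn0] := eqVneq d 0.
      by exists 1, 0; rewrite oner_eq0 b0 d0 conjC0 real0; split => //; ring.
    exists ('i * d), 0; rewrite mulf_neq0 ?neq0Ci // real0 b0 rmorphM /= conjCi conjC0.
    by split => //; ring.
  exists ('i * b), 0; rewrite mulf_neq0 ?neq0Ci // real0 rmorphM /= conjCi.
  split => //; first ring.
  by transitivity ('i * (d^* * b - d * b^*)); [ring | rewrite im0 mulr0].
exists ('i * (b * v - d * u)), (- 'i * (d^* * b - d * b^*)).
have cw : ('i * (b * v - d * u))^* = - 'i * (b^* * v - d^* * u).
  by rewrite rmorphM rmorphB !rmorphM /= conjCi hu hv.
have cz : (- 'i * (d^* * b - d * b^*))^* = - 'i * (d^* * b - d * b^*).
  by rewrite rmorphM rmorphN rmorphB !rmorphM /= conjCi !conjCK; ring.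
rewrite cw; split; try ring.
- by apply/orP; right; rewrite mulf_neq0 // oppr_eq0 neq0Ci.
- exact/CrealP.
Qed.

Lemma transpose_pair_cptp a b : psd a -> psd b ->
  exists M, [/\ cptp M, M a = a^T & M b = b^T].
Proof.
move=> /psd_hermitian [ha10 ha00 ha11] /psd_hermitian [hb10 hb00 hb11].
have [w [z [wz_neq0 z_real ca cb]]] :=
  reflector_exists (a 0 1) (b 0 1) (rpredB ha00 ha11) (rpredB hb00 hb11).
exists (conj_map (reflector w z) (reflector_scale w z)); split.
- exact: conj_map_cptp (reflector_scale_gt0 wz_neq0) (reflector_gram w z_real).
- by apply: reflector_transposes; rewrite ?ha10.
- by apply: reflector_transposes; rewrite ?hb10.
Qed.

Lemma transpose_mixture_pair_cptp E1 E2 (p : C) (V : 'M[C]_2 -> 'M[C]_2) a b :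
  cptp E1 -> cptp E2 -> 0 <= p <= 1 ->
  (forall X, V X = p *: E1 X + (1 - p) *: E2 X^T) -> psd a -> psd b ->
  exists L, [/\ cptp L, V a = L a & V b = L b].
Proof.
move=> h1 h2 hp hV ha hb.
have [M [hM Ma Mb]] := transpose_pair_cptp ha hb.
exists (fun X => p *: E1 X + (1 - p) *: E2 (M X)); split.
- exact: cptp_convex h1 (cptp_comp h2 hM) hp.
- by rewrite hV Ma.
- by rewrite hV Mb.
Qed.

End QubitMaps.

Unset Implicit Arguments.

(* Monotonicity of contractive functions along the evolution: V_{t,s} agrees
   on the two states Lam_s rho, Lam_s sigma with some CPTP map. *)
Theorem theorem1 (C : numClosedFieldType) (R : realFieldType)
  (Lam : R -> 'M[C]_2 -> 'M[C]_2)
  (hcptp : forall t : R, 0 <= t -> cptp (Lam t))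
  (hid : forall X : 'M[C]_2, Lam 0 X = X)
  (hdec : forall s t : R, 0 <= s -> s <= t ->
     exists (V : 'M[C]_2 -> 'M[C]_2) (p : C) (E1 E2 : 'M[C]_2 -> 'M[C]_2),
       is_linear_map V /\
       (forall X : 'M[C]_2, Lam t X = V (Lam s X)) /\
       0 <= p <= 1 /\
       cptp E1 /\ cptp E2 /\
       (forall X : 'M[C]_2, V X = p *: E1 X + (1 - p) *: E2 X^T)) :
  forall (disp : Order.disp_t) (T : porderType disp)
         (f : 'M[C]_2 -> 'M[C]_2 -> T),
    contractive f ->
    forall rho sigma : 'M[C]_2, is_state rho -> is_state sigma ->
    forall s t : R, 0 <= s -> s <= t ->
      (f (Lam t rho) (Lam t sigma) <= f (Lam s rho) (Lam s sigma))%O.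
Proof.
move=> disp T f hf rho sigma hrho hsigma s t s_ge0 st.
have [V [p [E1 [E2 [_ [hLam [hp [h1 [h2 hV]]]]]]]]] := hdec s t s_ge0 st.
have ha := cptp_state (hcptp s s_ge0) hrho.
have hb := cptp_state (hcptp s s_ge0) hsigma.
have [L [hL La Lb]] := transpose_mixture_pair_cptp h1 h2 hp hV ha.1 hb.1.
by rewrite !hLam La Lb; apply: hf.
Qed.
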